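(* Let $\mu$ be a finite Borel measure on $\mathbb{R}^d$ and suppose there exists a frame measure $\nu$ for $\mu$ with frame bounds $A,B>0$. Assume in addition that there exist a Borel set $F\subset\mathbb{R}^d$ with $\mu(F)>0$ and a vector $a\in\mathbb{R}^d$ such that $T_a(\mu|_{F+a})\ll\mu$. Then $$\frac{B}{A}\geq\left\|\frac{dT_a(\mu|_{F+a})}{d\mu}\right\|_{L^\infty(\mu)}.$$
   Context: For $t,x\in\mathbb{R}^d$ let $e_t(x)=e^{2\pi i t\cdot x}$. For a finite Borel measure $\mu$ and $f\in L^1(\mu)$, $\widehat{f\,d\mu}(t)=\int f(x)e^{-2\pi i t\cdot x}\,d\mu(x)$. A Borel measure $\nu$ on $\mathbb{R}^d$ is a frame measure for $\mu$ with frame bounds $A,B>0$ if $A\|f\|_{L^2(\mu)}^2\le \|\widehat{f\,d\mu}\|_{L^2(\nu)}^2\le B\|f\|_{L^2(\mu)}^2$ for all $f\in L^2(\mu)$; it is a tight frame measure if one can take $A=B$. For a Borel set $E$, $\mu|_E(G):=\mu(E\cap G)$; for $a\in\mathbb{R}^d$, $T_a\mu(G):=\mu(G+a)$ for Borel $G$ (so $\int f\,dT_a\mu=\int f(x-a)\,d\mu(x)$). $\frac{d\omega}{d\mu}$ denotes the Radon–Nikodym derivative and $\|\cdot\|_{L^\infty(\mu)}$ the $\mu$-essential supremum. *)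

From HB Require Import structures.
From mathcomp Require Import all_boot all_order all_algebra.
From mathcomp Require Import all_classical all_reals all_analysis.
From mathcomp Require Import complex.
From mathcomp Require Import ess_sup_inf.

Set Implicit Arguments.
Unset Strict Implicit.
Unset Printing Implicit Defensive.

Import Order.TTheory GRing.Theory Num.Theory.
Import numFieldNormedType.Exports.

Local Open Scope classical_set_scope.
Local Open Scope ring_scope.
Local Open Scope complex_scope.

(* R^d : row vectors of length d, equipped with the Borel sigma-algebra,
   i.e. the sigma-algebra generated by the open sets of the (Euclidean,
   product) topology of 'rV[R]_d. *)
Definition Rd (R : realType) (d : nat) : Type :=
  g_sigma_algebraType (@open ('rV[R]_d)).

Definition dotRd (R : realType) (d : nat) (t x : 'rV[R]_d) : R :=
  \sum_(i < d) t 0 i * x 0 i.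

Definition cexpi (R : realType) (theta : R) : R[i] := (cos theta) +i* (sin theta).

Definition cnorm2 (R : realType) (z : R[i]) : R := complex.Re z ^+ 2 + complex.Im z ^+ 2.

Definition cintegral (R : realType) (d : nat)
  (mu : {measure set (Rd R d) -> \bar R}) (g : Rd R d -> R[i]) : R[i] :=
  (Rintegral mu setT (fun x => complex.Re (g x))) +i* (Rintegral mu setT (fun x => complex.Im (g x))).

Definition fourier_meas (R : realType) (d : nat)
  (mu : {measure set (Rd R d) -> \bar R}) (f : Rd R d -> R[i]) (t : 'rV[R]_d) : R[i] :=
  cintegral mu (fun x => f x * cexpi (- (2 * pi * dotRd t x))).

Definition L2 (R : realType) (d : nat)
  (mu : {measure set (Rd R d) -> \bar R}) (f : Rd R d -> R[i]) : Prop :=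
  measurable_fun setT (fun x => complex.Re (f x)) /\
  measurable_fun setT (fun x => complex.Im (f x)) /\
  (\int[mu]_x (cnorm2 (f x))%:E < +oo)%E.

Definition L2norm2 (R : realType) (d : nat)
  (mu : {measure set (Rd R d) -> \bar R}) (f : Rd R d -> R[i]) : \bar R :=
  (\int[mu]_x (cnorm2 (f x))%:E)%E.

Definition frame_measure (R : realType) (d : nat)
  (mu nu : {measure set (Rd R d) -> \bar R}) (A B : R) : Prop :=
  0 < A /\ 0 < B /\
  forall f : Rd R d -> R[i], L2 mu f ->
    (A%:E * L2norm2 mu f <= \int[nu]_t (cnorm2 (fourier_meas mu f t))%:E)%E /\
    (\int[nu]_t (cnorm2 (fourier_meas mu f t))%:E <= B%:E * L2norm2 mu f)%E.

Definition shift_set (R : realType) (d : nat) (G : set (Rd R d)) (a : 'rV[R]_d)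
  : set (Rd R d) := [set (x : 'rV[R]_d) + a | x in G].

Definition meas_restrict (R : realType) (d : nat) (m : set (Rd R d) -> \bar R)
  (E : set (Rd R d)) : set (Rd R d) -> \bar R := fun G => m (E `&` G).

Definition meas_translate (R : realType) (d : nat) (a : 'rV[R]_d)
  (m : set (Rd R d) -> \bar R) : set (Rd R d) -> \bar R :=
  fun G => m (shift_set G a).

(* Write tau x := x - a, so that T_a(mu|_{F+a}) is the image under tau of mu
   restricted to tau^-1 F, with density g.  For E inside F on which g is bounded
   take u1 := 1_E g and u2 := 1_{E+a}.  The change of variables by tau gives
   \hat{u1 mu}(t) = \int_{E+a} e_{-t}(x - a) dmu(x) = e_t(a) \hat{u2 mu}(t), so the
   two Fourier transforms have the same modulus, while ||u1||^2 = \int_E g^2 and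
   ||u2||^2 = mu(E+a) = \int_E g.  The frame inequalities then give
   A \int_E g^2 <= B \int_E g, which forces mu(E) = 0 as soon as g > B/A on E.
   Outside F the density g vanishes almost everywhere, and countably many sets E
   exhaust {g > B/A}. *)

From HB Require Import structures.
From mathcomp Require Import all_boot all_order all_algebra.
From mathcomp Require Import all_classical all_reals all_analysis.
From mathcomp Require Import complex.
From mathcomp Require Import ess_sup_inf measurable_realfun.
From mathcomp Require Import ring lra.

Import Order.TTheory GRing.Theory Num.Theory.
Import numFieldNormedType.Exports.

Local Open Scope classical_set_scope.
Local Open Scope ring_scope.

Section finite_pushforward.
Context {d d' : measure_display} {T1 : measurableType d} {T2 : measurableType d'}.
Context {R : realType} (mu : {finite_measure set T1 -> \bar R}) {f : T1 -> T2}.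
Hypothesis mf : measurable_fun setT f.

(* The library's measure instance on [pushforward mu f] takes the proof [mf] as an
   argument, which canonical-structure inference cannot supply; carrying [mf] in
   the term restores inference. *)
Definition finite_pushforward of measurable_fun setT f := pushforward mu f.

HB.instance Definition _ := Measure.copy (finite_pushforward mf)
  (measure_function_pushforward__canonical__measure_function_Measure mu mf).

Let finite_pushforward_fin_num : fin_num_fun (finite_pushforward mf).
Proof.
by move=> A mA; apply: fin_num_measure; rewrite -[X in measurable X]setTI; exact: mf.
Qed.

HB.instance Definition _ := Measure_isFinite.Build _ _ _ (finite_pushforward mf)
  finite_pushforward_fin_num.

End finite_pushforward.

Section finite_measure_integral.
Local Open Scope ereal_scope.
Context {d : measure_display} {T : measurableType d} {R : realType}.
Section finite.
Variable mu : {finite_measure set T -> \bar R}.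

Lemma bounded_integrable {D : set T} {h : T -> R} {M : R} : measurable D ->
  measurable_fun setT h -> (forall x, D x -> (`|h x| <= M)%R) ->
  mu.-integrable D (EFin \o h).
Proof.
move=> mD mh hM; apply: measurable_bounded_integrable => //.
- by rewrite ltey_eq fin_num_measure.
- exact: measurable_funTS.
- exists M; split; first exact: num_real.
  by move=> N MN x Dx; apply: le_trans (hM x Dx) _; exact: ltW.
Qed.

Let integrable_trig_comp {D : set T} {alpha : T -> R} (h : R -> R) :
  measurable D -> measurable_fun setT alpha -> continuous h ->
  (forall r, `|h r| <= 1)%R -> mu.-integrable D (EFin \o (h \o alpha)).
Proof.
move=> mD malpha ch h1; apply: bounded_integrable mD _ (fun x _ => h1 (alpha x)).
exact: measurableT_comp (continuous_measurable_fun ch) malpha.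
Qed.

Lemma Rintegral_indic_cosD {D : set T} {alpha : T -> R} (beta : R) :
  measurable D -> measurable_fun setT alpha ->
  Rintegral mu setT (fun x => \1_D x * cos (alpha x + beta))%R =
  (Rintegral mu D (cos \o alpha) * cos beta - Rintegral mu D (sin \o alpha) * sin beta)%R.
Proof.
move=> mD malpha.
have icos := integrable_trig_comp _ mD malpha (@continuous_cos R) (@cos_max R).
have isin := integrable_trig_comp _ mD malpha (@continuous_sin R) (@sin_max R).
rewrite -!RintegralZr// -RintegralB//; last 2 first.
- by apply: eq_integrable (integrableZr mD _ icos) => // x _; rewrite /= EFinM.
- by apply: eq_integrable (integrableZr mD _ isin) => // x _; rewrite /= EFinM.
rewrite [RHS]Rintegral_mkcond; apply: eq_Rintegral => x _.
by rewrite /patch indicE; case: ifP => _; rewrite ?mul1r ?mul0r// cosD.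
Qed.

Lemma Rintegral_indic_sinD {D : set T} {alpha : T -> R} (beta : R) :
  measurable D -> measurable_fun setT alpha ->
  Rintegral mu setT (fun x => \1_D x * sin (alpha x + beta))%R =
  (Rintegral mu D (sin \o alpha) * cos beta + Rintegral mu D (cos \o alpha) * sin beta)%R.
Proof.
move=> mD malpha.
have icos := integrable_trig_comp _ mD malpha (@continuous_cos R) (@cos_max R).
have isin := integrable_trig_comp _ mD malpha (@continuous_sin R) (@sin_max R).
rewrite -!RintegralZr// -RintegralD//; last 2 first.
- by apply: eq_integrable (integrableZr mD _ isin) => // x _; rewrite /= EFinM.
- by apply: eq_integrable (integrableZr mD _ icos) => // x _; rewrite /= EFinM.
rewrite [RHS]Rintegral_mkcond; apply: eq_Rintegral => x _.
by rewrite /patch indicE; case: ifP => _; rewrite ?mul1r ?mul0r// sinD.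
Qed.

End finite.

Lemma null_set_of_integral_le0 {mu : {measure set T -> \bar R}} {G : set T}
    {g : T -> R} {k : R} :
  measurable G -> measurable_fun setT g -> (0 < k)%R ->
  (forall x, G x -> (k <= g x)%R) -> \int[mu]_(x in G) (g x)%:E <= 0 ->
  mu G = 0.
Proof.
move=> mG mg k0 kg int_le0; apply/eqP; rewrite eq_le measure_ge0 andbT.
rewrite -(pmule_rle0 _ (_ : 0 < k%:E)) ?lte_fin//.
rewrite -integral_cst//; apply: le_trans int_le0; apply: ge0_le_integral => //.
- by move=> x _; rewrite lee_fin ltW.
- by apply/measurable_EFinP; exact: measurable_funTS.
Qed.

End finite_measure_integral.

Section density_change_of_variables.
Local Open Scope ereal_scope.
Context {d : measure_display} {T : measurableType d} {R : realType}.
Context (mu : {finite_measure set T -> \bar R}) {f : T -> T} {F : set T} {g : T -> R}.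
Hypotheses (mf : measurable_fun setT f) (mF : measurable F) (mg : measurable_fun setT g).
(* [g] is a density of the image under [f] of [mu] restricted to [f @^-1` F]. *)
Hypothesis g_density : forall G, measurable G ->
  mu (f @^-1` (G `&` F)) = \int[mu]_(x in G) (g x)%:E.

Let Q := mrestr (finite_pushforward mu mf) mF.

Let QE G : measurable G -> Q G = \int[mu]_(x in G) (g x)%:E.
Proof. exact: g_density. Qed.

Let Q_dominated : Q `<< mu.
Proof.
apply/null_content_dominatesP => G mG muG; rewrite QE//.
by apply: null_set_integral => //; apply/measurable_EFinP; exact: measurable_funTS.
Qed.

Lemma integral_density_comp {E : set T} {phi : T -> R} {M : R} :
  measurable E -> E `<=` F -> measurable_fun setT phi ->
  (forall x, (`|phi x| <= M)%R) ->
  \int[mu]_(x in E) ((phi x)%:E * (g x)%:E) =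
  \int[mu]_(x in f @^-1` E) (phi (f x))%:E.
Proof.
move=> mE EF mphi phiM.
have mfE : measurable (f @^-1` E) by rewrite -[X in measurable X]setTI; exact: mf.
pose RN := Radon_Nikodym (charge_of_finite_measure Q) mu.
have RN_g : ae_eq mu E RN (EFin \o g).
  apply: integral_ae_eq => //.
  - by apply: (integrableS measurableT) => //; exact: Radon_Nikodym_integrable.
  - by apply/measurable_EFinP; exact: measurable_funTS.
  - by move=> G GE mG; rewrite -Radon_Nikodym_integral//; exact: QE.
transitivity (\int[mu]_(x in E) ((phi x)%:E * RN x)).
  apply: ae_eq_integral => //.
  - apply: emeasurable_funM; apply/measurable_EFinP; exact: measurable_funTS.
  - apply: emeasurable_funM; first by apply/measurable_EFinP; exact: measurable_funTS.
    by apply: measurable_funTS; apply: measurable_int; exact: Radon_Nikodym_integrable.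
  - exact: ae_eq_sym (ae_eqe_mul2l _ RN_g).
rewrite (Radon_Nikodym_change_of_variables Q_dominated) //; last first.
  exact: bounded_integrable _ mE mphi (fun x _ => phiM x).
rewrite (eq_measure_integral (finite_pushforward mu mf)); last first.
  by move=> G mG GE; rewrite /Q /= /mrestr setIidl//; exact: subset_trans EF.
rewrite (integral_pushforward mf (f := EFin \o phi)) //.
- exact/measurable_EFinP.
- apply: bounded_integrable _ mfE (measurableT_comp mphi mf) (fun x _ => phiM (f x)).
Qed.

Lemma Rintegral_indic_density_comp {E : set T} {phi : T -> R} {M : R} :
  measurable E -> E `<=` F -> measurable_fun setT phi ->
  (forall x, (`|phi x| <= M)%R) ->
  Rintegral mu setT (fun x => \1_E x * g x * phi x)%R =
  Rintegral mu (f @^-1` E) (phi \o f).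
Proof.
move=> mE EF mphi phiM.
transitivity (Rintegral mu E (fun x => phi x * g x)%R).
  rewrite [RHS]Rintegral_mkcond; apply: eq_Rintegral => x _.
  by rewrite /patch indicE; case: ifP => _; rewrite ?mul1r ?mul0r// mulrC.
rewrite /Rintegral; under eq_integral do rewrite EFinM.
by rewrite (integral_density_comp mE EF mphi phiM).
Qed.

Lemma density_null_outside {G : set T} {k : R} : measurable G -> G `<=` ~` F ->
  (0 < k)%R -> (forall x, G x -> (k <= g x)%R) -> mu G = 0.
Proof.
move=> mG GF k0 kg; apply: (null_set_of_integral_le0 mG mg k0 kg).
rewrite -g_density// (_ : G `&` F = set0) ?preimage_set0 ?measure0//.
by apply/seteqP; split => // x [/GF].
Qed.

Section quadratic_bound.
Context {A B : R}.
Hypotheses (A_gt0 : (0 < A)%R) (B_gt0 : (0 < B)%R).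
Hypothesis quadratic_bound : forall (E : set T) (N : R), measurable E -> E `<=` F ->
  (forall x, E x -> (`|g x| <= N)%R) ->
  A%:E * \int[mu]_(x in E) (g x ^+ 2)%:E <= B%:E * \int[mu]_(x in E) (g x)%:E.

Lemma density_null_inside {E : set T} {k N : R} : measurable E -> E `<=` F ->
  (B / A < k)%R -> (forall x, E x -> (k <= g x <= N)%R) -> mu E = 0.
Proof.
move=> mE EF ltBAk kgN.
have k0 : (0 < k)%R by apply: lt_trans ltBAk; rewrite divr_gt0.
have [kg gN] : (forall x, E x -> k <= g x)%R /\ (forall x, E x -> g x <= N)%R.
  by split=> x /kgN /andP[].
have g_ge0 x : E x -> (0 <= g x)%R by move=> /kg; exact: le_trans (ltW k0).
have normgN x : E x -> (`|g x| <= N)%R by move=> Ex; rewrite ger0_norm ?gN ?g_ge0.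
have normg2N x : E x -> (`|g x ^+ 2| <= N ^+ 2)%R.
  by move=> Ex; rewrite normrX lerXn2r ?nnegrE ?normgN// (le_trans _ (normgN x Ex)).
have [I1 I1E] : exists r, \int[mu]_(x in E) (g x)%:E = r%:E.
  exists (fine (\int[mu]_(x in E) (g x)%:E)); rewrite fineK//.
  apply: integrable_fin_num => //; exact: bounded_integrable _ mE mg normgN.
have [I2 I2E] : exists r, \int[mu]_(x in E) (g x ^+ 2)%:E = r%:E.
  exists (fine (\int[mu]_(x in E) (g x ^+ 2)%:E)); rewrite fineK//.
  apply: integrable_fin_num => //; exact: bounded_integrable _ mE (measurable_funM mg mg) normg2N.
have kI1_le_I2 : (k * I1 <= I2)%R.
  rewrite -lee_fin EFinM -I1E -I2E -integralZl//; last first.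
    exact: bounded_integrable _ mE mg normgN.
  apply: ge0_le_integral => //.
  - by move=> x Ex; rewrite -EFinM lee_fin mulr_ge0 ?g_ge0// ltW.
  - by apply/measurable_EFinP; apply: measurable_funTS; exact: measurable_funM.
  - by apply/measurable_EFinP; apply: measurable_funTS; exact: measurable_funM.
  - by move=> x Ex; rewrite -EFinM lee_fin expr2 ler_wpM2r ?g_ge0 ?kg.
have := quadratic_bound _ _ mE EF normgN; rewrite I1E I2E -!EFinM lee_fin => AI2_le_BI1.
have ltBAk' : (0 < A * k - B)%R by rewrite subr_gt0 -ltr_pdivrMl// mulrC.
have : ((A * k - B) * I1 <= 0)%R.
  have := ler_wpM2l (ltW A_gt0) kI1_le_I2; lra.
rewrite pmulr_rle0// => I1_le0.
by apply: (null_set_of_integral_le0 mE mg k0 kg); rewrite I1E lee_fin.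
Qed.

Lemma ess_sup_density_le : ess_sup mu (fun x => (g x)%:E) <= (B / A)%:E.
Proof.
set c := (B / A)%R; have c0 : (0 < c)%R by rewrite divr_gt0.
have mg_pre (I : set R) : measurable I -> measurable (g @^-1` I).
  by move=> mI; rewrite -[X in measurable X]setTI; exact: mg.
(* {g > c} is covered by [G] and the sets [E n m]. *)
pose G := ~` F `&` g @^-1` `]c, +oo[%classic.
pose E (n m : nat) := F `&` g @^-1` `[(c + n.+1%:R^-1)%R, m%:R]%classic.
have mG : measurable G by apply: measurableI; [exact: measurableC | exact: mg_pre].
have mE n m : measurable (E n m) by apply: measurableI => //; exact: mg_pre.
have nullG : mu.-negligible G.
  exists G; split => //; apply: (density_null_outside mG _ c0); first by move=> x [].
  by move=> x [_ /=]; rewrite in_itv/= andbT => /ltW.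
have nullE n m : mu.-negligible (E n m).
  exists (E n m); split => //; apply: (density_null_inside (k := (c + n.+1%:R^-1)%R) (N := m%:R) (mE n m)).
  - by move=> x [].
  - by rewrite ltrDl invr_gt0.
  - by move=> x [_ /=]; rewrite in_itv.
apply/ess_supP; apply: (negligibleS _ (negligibleU nullG
  (negligible_bigcup (fun n => negligible_bigcup (fun m => nullE n m))))).
move=> x /= /negP; rewrite -ltNge lte_fin => cgx.
have [Fx|nFx] := pselect (F x); last by left; split => //=; rewrite in_itv/= andbT.
right; have [n ltcn] := ltr_add_invr cgx.
exists n => //; exists (Num.Def.archi_bound (g x)) => //; split => //=.
rewrite in_itv/= (ltW ltcn)/=; apply/ltW/archi_boundP.
exact: le_trans (ltW c0) (ltW cgx).
Qed.

End quadratic_bound.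

End density_change_of_variables.

Section euclidean.
Local Open Scope complex_scope.
Context {R : realType} {d : nat}.
Local Notation T := (Rd R d).

Lemma open_measurable_Rd (U : set 'rV[R]_d) : open U -> measurable (U : set T).
Proof. exact: sub_sigma_algebra. Qed.

Lemma continuous_measurable_fun_Rd (f : 'rV[R]_d -> R) : continuous f ->
  measurable_fun (setT : set T) f.
Proof.
move=> /continuousP cf; apply: (measurability _ (RGenOpens.measurableE R)).
move=> _ [_ [a [b ->] <-]]; rewrite setTI; apply: open_measurable_Rd.
exact/cf/interval_open.
Qed.

Definition translate (a : 'rV[R]_d) (x : T) : T := x - a.

Lemma measurable_translate a : measurable_fun setT (translate a).
Proof.
have cont : continuous (fun x : 'rV[R]_d => x - a).
  by move=> x; apply: continuousB; [exact: id | exact: cst_continuous].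
apply: (@measurability _ _ _ _ setT (translate a) (@open 'rV[R]_d)) => // _ [U oU <-].
by rewrite setTI; apply: open_measurable_Rd; exact: (continuousP _).1 cont U oU.
Qed.

Lemma shift_setE (G : set T) a : shift_set G a = translate a @^-1` G.
Proof.
apply/seteqP; split => x /=; first by case=> y Gy <-; rewrite /translate addrK.
by move=> Gx; exists (translate a x) => //; rewrite /translate subrK.
Qed.

Lemma continuous_dotRd (t : 'rV[R]_d) : continuous (dotRd t).
Proof.
have -> : dotRd t = \sum_(i < d) (fun y : 'rV[R]_d => t 0 i * y 0 i).
  by rewrite fct_sumE.
apply: (big_ind (fun h : 'rV[R]_d -> R => continuous h)).
- exact: cst_continuous.
- by move=> h1 h2 ch1 ch2 y; exact: cvgD (ch1 y) (ch2 y).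
- by move=> i _ y; exact: cvgM (cvg_cst _) (@coord_continuous R 1 d 0 i y).
Qed.

Definition phase (t x : 'rV[R]_d) : R := - (2 * pi * dotRd t x).

Lemma continuous_phase t : continuous (phase t).
Proof. by move=> x; exact: cvgN (cvgM (cvg_cst (2 * pi)) (continuous_dotRd t x)). Qed.

Lemma measurable_phase t : measurable_fun (setT : set T) (phase t).
Proof. exact: continuous_measurable_fun_Rd (continuous_phase t). Qed.

Lemma phase_translate t a x : phase t x = phase t (translate a x) + phase t a.
Proof.
rewrite /phase /translate /dotRd -opprD -mulrDr -big_split /=; congr (- (_ * _)).
by apply: eq_bigr => i _; rewrite !mxE -mulrDr subrK.
Qed.

Lemma fourier_meas_real (m : {measure set T -> \bar R}) (u : T -> R) t :
  fourier_meas m (fun x => u x +i* 0) t =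
  (Rintegral m setT (fun x => u x * cos (phase t x))) +i*
  (Rintegral m setT (fun x => u x * sin (phase t x))).
Proof.
by congr (_ +i* _); apply: eq_Rintegral => x _ /=; rewrite mul0r ?subr0 ?addr0.
Qed.

Lemma L2norm2_real (m : {measure set T -> \bar R}) (u : T -> R) :
  L2norm2 m (fun x => u x +i* 0) = (\int[m]_x (u x ^+ 2)%:E)%E.
Proof. by apply: eq_integral => x _; rewrite /cnorm2 /= expr0n addr0. Qed.

Lemma L2_bounded (m : {finite_measure set T -> \bar R}) {u : T -> R} {M : R} :
  measurable_fun setT u -> (forall x, `|u x| <= M) -> L2 m (fun x => u x +i* 0).
Proof.
move=> mfu uM; split=> //; split; first exact: measurable_cst.
rewrite -/(L2norm2 _ _) L2norm2_real; apply: (integrable_lty measurableT).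
apply: (bounded_integrable _ measurableT (measurable_funM mfu mfu) (M := M ^+ 2)) => x _.
by rewrite /= -expr2 normrX lerXn2r ?nnegrE ?uM// (le_trans _ (uM x)).
Qed.

End euclidean.

Section frame_bound.
Local Open Scope complex_scope.
Context {R : realType} {d : nat}.
Local Notation T := (Rd R d).
Context {mu : {finite_measure set T -> \bar R}} {nu : {measure set T -> \bar R}} {A B : R}.
Hypothesis frame : frame_measure mu nu A B.
Context {F : set T} {a : 'rV[R]_d} {g : T -> R}.
Hypotheses (mF : measurable F) (mg : measurable_fun setT g).
Hypothesis g_density : forall G, measurable G ->
  mu (translate a @^-1` (G `&` F)) = (\int[mu]_(x in G) (g x)%:E)%E.

Let measurable_translate_pre {E : set T} :
  measurable E -> measurable (translate a @^-1` E).
Proof. by move=> mE; rewrite -[X in measurable X]setTI; exact: measurable_translate. Qed.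

Lemma cnorm2_fourier_density_indic (E : set T) t : measurable E -> E `<=` F ->
  cnorm2 (fourier_meas mu (fun x => (\1_E x * g x) +i* 0) t) =
  cnorm2 (fourier_meas mu (fun x => \1_(translate a @^-1` E) x +i* 0) t).
Proof.
move=> mE EF; set D := translate a @^-1` E.
have mD : measurable D := measurable_translate_pre mE.
have mphase := measurable_phase t.
have mphase_tr := measurableT_comp mphase (measurable_translate a).
have mtrig (h : R -> R) : continuous h -> measurable_fun (setT : set T) (h \o phase t).
  by move=> ch; exact: measurableT_comp (continuous_measurable_fun ch) mphase.
rewrite !fourier_meas_real.
rewrite (Rintegral_indic_density_comp mu (measurable_translate a) mF mg g_density mE EF
  (mtrig _ (@continuous_cos R)) (fun x => cos_max (phase t x))).
rewrite (Rintegral_indic_density_comp mu (measurable_translate a) mF mg g_density mE EF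
  (mtrig _ (@continuous_sin R)) (fun x => sin_max (phase t x))).
have shift_phase (h : R -> R) :
    Rintegral mu setT (fun x => \1_D x * h (phase t x)) =
    Rintegral mu setT (fun x => \1_D x * h (phase t (translate a x) + phase t a)).
  by apply: eq_Rintegral => x _; rewrite -phase_translate.
rewrite !shift_phase (Rintegral_indic_cosD _ _ mD mphase_tr) (Rintegral_indic_sinD _ _ mD mphase_tr).
rewrite /cnorm2 /=; set C := Rintegral _ _ _; set S := Rintegral _ _ _.
have := cos2Dsin2 (phase t a); set c := cos _; set s := sin _ => cs.
have -> : (C * c - S * s) ^+ 2 + (S * c + C * s) ^+ 2 = (C ^+ 2 + S ^+ 2) * (c ^+ 2 + s ^+ 2).
  by ring.
by rewrite cs mulr1.
Qed.

Lemma frame_quadratic_bound (E : set T) (N : R) : measurable E -> E `<=` F ->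
  (forall x, E x -> `|g x| <= N) ->
  (A%:E * \int[mu]_(x in E) (g x ^+ 2)%:E <= B%:E * \int[mu]_(x in E) (g x)%:E)%E.
Proof.
move=> mE EF gN; set D := translate a @^-1` E.
pose u1 x := \1_E x * g x; pose u2 x : R := \1_D x.
have mfu1 : measurable_fun setT u1 by apply: measurable_funM => //; exact: measurable_indic.
have mfu2 : measurable_fun setT u2 by apply: measurable_indic; exact: measurable_translate_pre.
have u1_bounded x : `|u1 x| <= Num.max N 0.
  rewrite /u1 indicE; case: (boolP (x \in E)) => [/set_mem Ex|_].
    by rewrite mul1r le_max gN.
  by rewrite mul0r normr0 le_max lexx orbT.
have u2_bounded x : `|u2 x| <= 1 by rewrite /u2 indicE; case: (_ \in _); rewrite ?normr1 ?normr0.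
have [_ [_ frame_ineq]] := frame.
have [lower _] := frame_ineq _ (L2_bounded mu mfu1 u1_bounded).
have [_ upper] := frame_ineq _ (L2_bounded mu mfu2 u2_bounded).
have norm_u1 : L2norm2 mu (fun x => u1 x +i* 0) = (\int[mu]_(x in E) (g x ^+ 2)%:E)%E.
  rewrite L2norm2_real [RHS]integral_mkcond; apply: eq_integral => x _.
  by rewrite /patch /u1 indicE; case: ifP => _; rewrite ?mul1r ?mul0r ?expr0n.
have norm_u2 : L2norm2 mu (fun x => u2 x +i* 0) = (\int[mu]_(x in E) (g x)%:E)%E.
  rewrite -g_density// setIidl// -/D -(setIT D) -integral_indic//; last exact: measurable_translate_pre.
  rewrite L2norm2_real; apply: eq_integral => x _.
  by rewrite /u2 indicE; case: (_ \in _); rewrite ?expr1n ?expr0n.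
rewrite -norm_u1 -norm_u2; apply: le_trans lower _; apply: le_trans upper.
by under eq_integral do rewrite cnorm2_fourier_density_indic//.
Qed.

End frame_bound.

Theorem theorem2p2 (R : realType) (d : nat)
  (mu : {finite_measure set (Rd R d) -> \bar R})
  (nu : {measure set (Rd R d) -> \bar R}) (A B : R)
  (hframe : frame_measure mu nu A B)
  (F : set (Rd R d)) (mF : measurable F) (muF : (0 < mu F)%E)
  (a : 'rV[R]_d)
  (hac : null_dominates mu (meas_translate a (meas_restrict mu (shift_set F a))))
  (g : Rd R d -> R)
  (hg : measurable_fun setT g)
  (hgi : mu.-integrable setT (fun x => (g x)%:E))
  (hdens : forall G : set (Rd R d), measurable G ->
     meas_translate a (meas_restrict mu (shift_set F a)) G = (\int[mu]_(x in G) (g x)%:E)%E) :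
  (ess_sup mu (fun x => (g x)%:E) <= (B / A)%:E)%E.
Proof.
have [A_gt0 [B_gt0 _]] := hframe.
have g_density G : measurable G ->
    mu (translate a @^-1` (G `&` F)) = (\int[mu]_(x in G) (g x)%:E)%E.
  move=> mG; rewrite -hdens// /meas_translate /meas_restrict !shift_setE.
  by rewrite preimage_setI setIC.
apply: (ess_sup_density_le mu mF hg g_density A_gt0 B_gt0) => E N mE EF.
exact: (frame_quadratic_bound hframe mF hg g_density E N mE EF).
Qed.
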